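(* Let $D$ be a set, let $m \ge 1$, $e \ge k \ge 1$ be integers, and let $\Sigma = \mathbb{Z}_{2^{32}}^{2m}$. Let $J : D \to \Sigma^{e}$ be a map (an erasure code) with minimum distance $k$, i.e. for all $x \neq y$ in $D$, the sequences $J(x)$ and $J(y)$ differ in at least $k$ of their $e$ coordinates. For a key $s \in \mathbb{Z}_{2^{32}}^{2m}$ and $d \in \Sigma$ define $$\mathrm{NH}(s,d) = \sum_{i=0}^{m-1} (d_{2i} + s_{2i})(d_{2i+1} + s_{2i+1}) \in \mathbb{Z}_{2^{64}},$$ where each addition $d_j + s_j$ is computed in $\mathbb{Z}_{2^{32}}$ and the result is regarded as an integer in $[0,2^{32})$, while the products and the outer sum are computed in $\mathbb{Z}_{2^{64}}$. Let $T$ be a $k \times e$ matrix with integer entries, acting on $\mathbb{Z}_{2^{64}}^{e}$ by matrix multiplication over $\mathbb{Z}_{2^{64}}$. Assume that for every set $F$ of $k$ distinct column indices, the $k\times k$ submatrix $T|_F$ consisting of the columns of $T$ indexed by $F$ has integer determinant not divisible by $2^{64}$, and let $p$ be the largest integer such that $2^{p}$ divides $\det(T|_F)$ for some such $F$ (i.e. $p = \max_F \nu_2(\det T|_F)$). For keys $s = (s_1,\dots,s_e)$ with each $s_i \in \mathbb{Z}_{2^{32}}^{2m}$, define the EHC hash $$E(s,x) = T \cdot \big(\mathrm{NH}(s_1, J(x)_1), \dots, \mathrm{NH}(s_e, J(x)_e)\big)^{\top} \in \mathbb{Z}_{2^{64}}^{k}.$$ Then for all $x \neq y$ in $D$ and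 all $\delta \in \mathbb{Z}_{2^{64}}^{k}$, $$\Pr_s\big[E(s,x) - E(s,y) = \delta\big] \le 2^{k(p-32)},$$ where $s_1,\dots,s_e$ are chosen independently and uniformly at random from $\mathbb{Z}_{2^{32}}^{2m}$. That is, $E$ is $2^{k(p-32)}$-almost $\Delta$-universal.
   Context: A hash family $H$ (a map from seeds $S$ and domain $D$ to a codomain that is an abelian group) is $\varepsilon$-almost $\Delta$-universal if for all $x \neq y$ in $D$ and every $\delta$ in the codomain, $\Pr_{s \in S}[H(s,x) - H(s,y) = \delta] \le \varepsilon$, with $s$ uniform. $\nu_2(n)$ denotes the exponent of the largest power of $2$ dividing the nonzero integer $n$. This is the ''generalized Encode, Hash, Combine'' construction: encode with an erasure code of minimum distance $k$, hash each encoded coordinate with NH under independent keys, and combine with a fixed integer matrix over $\mathbb{Z}_{2^{64}}$. *)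

From HB Require Import structures.
From mathcomp Require Import all_boot all_order all_algebra.
From mathcomp Require Import zify.
Set Implicit Arguments. Unset Strict Implicit. Unset Printing Implicit Defensive.
Import GRing.Theory Num.Theory.
Local Open Scope ring_scope.

Notation Z32 := 'Z_(2 ^ 32).
Notation Z64 := 'Z_(2 ^ 64).

Notation Sigma m := 'rV[Z32]_(2 * m).

Lemma ev_lt (m : nat) (i : 'I_m) : (2 * i < 2 * m)%N.
Proof. by rewrite ltn_pmul2l. Qed.
Lemma od_lt (m : nat) (i : 'I_m) : (2 * i + 1 < 2 * m)%N.
Proof. have := ltn_ord i; lia. Qed.

Definition evi (m : nat) (i : 'I_m) : 'I_(2 * m) := Ordinal (ev_lt i).
Definition odi (m : nat) (i : 'I_m) : 'I_(2 * m) := Ordinal (od_lt i).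

Definition NH (m : nat) (s d : Sigma m) : Z64 :=
  \sum_(i < m)
    ((nat_of_ord (d 0 (evi i) + s 0 (evi i)))%:R *
     (nat_of_ord (d 0 (odi i) + s 0 (odi i)))%:R).

Definition hamming (A : eqType) (e : nat) (u v : 'I_e -> A) : nat :=
  #|[set i : 'I_e | u i != v i]|.

Definition EHC (D : Type) (m k e : nat) (J : D -> 'I_e -> Sigma m)
  (T : 'M[int]_(k, e)) (s : {ffun 'I_e -> Sigma m}) (x : D) : 'cV[Z64]_k :=
  map_mx (fun z : int => z%:~R) T *m \col_(i < e) NH (s i) (J x i).

Definition diff_prob (D : Type) (m k e : nat) (J : D -> 'I_e -> Sigma m)
  (T : 'M[int]_(k, e)) (x y : D) (delta : 'cV[Z64]_k) : rat :=
  (#|[set s : {ffun 'I_e -> Sigma m} | EHC J T s x - EHC J T s y == delta]|%:R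
   / #|{: {ffun 'I_e -> Sigma m}}|%:R).

(* Fix d <> d' in Sigma, say d_{2j} <> d'_{2j}, and vary only the key word t = s_{2j+1}.
   Then NH(s, d) - NH(s, d') changes by the block a (y + t) - a' (y' + t), with a <> a'
   below W = 2^32 and the sums y + t, y' + t reduced mod W; as integers, the values of
   this block at t1 <> t2 differ by a nonzero number of absolute value below W^2 = 2^64,
   so t is determined by the block mod 2^64.
   Now pick k coordinates F where J x and J y differ and one such key word in each.
   Shifting these k words by t in Z_W^k changes the NH-differences on F injectively and
   leaves the other coordinates alone, so on each orbit of size W^k the equation
   E(s,x) - E(s,y) = delta confines the NH-differences on F to a coset of the kernel of
   the minor T_F.  As adj(T_F) T_F = det(T_F), that kernel has at most
   gcd(det T_F, 2^64)^k <= 2^(pk) elements, and the probability is at most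
   2^(pk) / 2^(32k). *)

From Pilot Require Import Defs.
From HB Require Import structures.
From mathcomp Require Import all_boot all_order all_algebra zify ring.
Set Implicit Arguments. Unset Strict Implicit. Unset Printing Implicit Defensive.
Import GRing.Theory Num.Theory.
Local Open Scope ring_scope.

Lemma Zp_val_lt (W : nat) (u : 'Z_W) : (1 < W)%N -> (u < W)%N.
Proof. by move=> W_gt1; rewrite -[X in (_ < X)%N](Zp_cast W_gt1). Qed.

Lemma intr_Zp_eq0 (N : nat) (z : int) : (1 < N)%N ->
  (z%:~R == 0 :> 'Z_N) = (N%:Z %| z)%Z.
Proof.
move=> N_gt1; have natr_eq0 n : (n%:R == 0 :> 'Z_N) = (N %| n)%N.
  by rewrite -val_eqE /= val_Zp_nat.
case: z => n; first by rewrite -pmulrn natr_eq0.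
by rewrite NegzE mulrNz oppr_eq0 -pmulrn natr_eq0 dvdzE abszN.
Qed.

(* If X1 < X2 the wrap c is 0 or -1 (symmetrically 0 or 1); in each case the left-hand
   side of the last equation is nonzero and of absolute value below W^2. *)
Lemma wrapped_diff_mul_inj (W A A' X1 X2 Y1 Y2 c q : int) :
  0 <= A < W -> 0 <= A' < W -> A != A' ->
  0 <= X1 < W -> 0 <= X2 < W -> 0 <= Y1 < W -> 0 <= Y2 < W ->
  Y2 - Y1 = X2 - X1 + c * W -> A' * (Y2 - Y1) - A * (X2 - X1) = q * (W * W) ->
  X1 = X2.
Proof.
move=> hA hA' neqA hX1 hX2 hY1 hY2 hc hq.
case: (ltrgtP X1 X2) => // ltX.
- have c_small : c = 0 \/ c = -1 by nia.
  have q0 : q = 0 by case: c_small => ?; subst c; nia.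
  by subst q; case: c_small => ?; subst c; nia.
- have c_small : c = 0 \/ c = 1 by nia.
  have q0 : q = 0 by case: c_small => ?; subst c; nia.
  by subst q; case: c_small => ?; subst c; nia.
Qed.

Definition nh_mul (W N : nat) (a b : 'Z_W) : 'Z_N := (a : nat)%:R * (b : nat)%:R.

Lemma nh_mulC (W N : nat) (a b : 'Z_W) : nh_mul N a b = nh_mul N b a.
Proof. exact: mulrC. Qed.

Lemma nh_mul_sub_inj (W N : nat) (x x' y y' : 'Z_W) :
  (1 < W)%N -> N = (W * W)%N -> x != x' ->
  injective (fun t : 'Z_W => nh_mul N x (y + t) - nh_mul N x' (y' + t)).
Proof.
move=> W_gt1 hN neqx t1 t2 /= E.
have N_gt1 : (1 < N)%N by rewrite hN; nia.
pose v (u : 'Z_W) : int := nat_of_ord u.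
have bnd u : 0 <= v u < W%:Z by have := Zp_val_lt u W_gt1; rewrite /v; lia.
have /dvdzP [c hc] : (W%:Z %| (v (y' + t2) - v (y' + t1)) - (v (y + t2) - v (y + t1)))%Z.
  by rewrite -intr_Zp_eq0 // !rmorphB /= -!pmulrn !natr_Zp; apply/eqP; ring.
have /dvdzP [q hq] : (N%:Z %| v x' * (v (y' + t2) - v (y' + t1))
                               - v x * (v (y + t2) - v (y + t1)))%Z.
  have key : (v x' * (v (y' + t2) - v (y' + t1)) - v x * (v (y + t2) - v (y + t1)))%:~R
             = nh_mul N x (y + t1) - nh_mul N x' (y' + t1)
               - (nh_mul N x (y + t2) - nh_mul N x' (y' + t2)) :> 'Z_N.
    by rewrite !(rmorphB, rmorphM) /= -!pmulrn /nh_mul; ring.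
  by rewrite -intr_Zp_eq0 // key E subrr.
have : v (y + t1) = v (y + t2).
  apply: (@wrapped_diff_mul_inj _ _ _ _ _ (v (y' + t1)) (v (y' + t2)) c q
            (bnd x) (bnd x') _ (bnd _) (bnd _) (bnd _) (bnd _)).
  - by rewrite eqz_nat; apply: contra neqx => /eqP /val_inj ->.
  - by rewrite -hc; ring.
  - by rewrite hq hN PoszM.
by move=> /eqP; rewrite eqz_nat => /eqP /val_inj /addrI.
Qed.

Lemma coord_shift (R : pzRingType) n (u : 'rV[R]_n) (t : R) (c i : 'I_n) :
  (u + t *: delta_mx 0 c) 0 i = if i == c then u 0 i + t else u 0 i.
Proof. by rewrite !mxE eqxx /=; case: eqP => _; rewrite ?mulr1 ?mulr0 ?addr0. Qed.

Lemma ord_evi_odi m (i : 'I_(2 * m)) : exists j : 'I_m, i = evi j \/ i = odi j.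
Proof.
have lt_half : (i %/ 2 < m)%N by have := ltn_ord i; lia.
exists (Ordinal lt_half).
by case: (boolP (odd i)) => odd_i; [right | left]; apply: val_inj => /=; move: odd_i; lia.
Qed.

(* [NH_gen] and [EHC_gen] below are [NH] and [EHC] for a word size W and N = W^2; the
   definitions in [Defs] are their instances at W = 2^32 by conversion.  Keeping W and N
   abstract stops unification from unfolding the unary numeral 2^32. *)
Section GeneralNH.

Variables (W N m : nat).
Hypotheses (W_gt1 : (1 < W)%N) (N_sqr : N = (W * W)%N).

Definition nh_block (s d : 'rV['Z_W]_(2 * m)) (i : 'I_m) : 'Z_N :=
  nh_mul N (d 0 (evi i) + s 0 (evi i)) (d 0 (odi i) + s 0 (odi i)).

Definition NH_gen (s d : 'rV['Z_W]_(2 * m)) : 'Z_N := \sum_(i < m) nh_block s d i.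

Lemma NH_gen_sub_block (j : 'I_m) (s d d' : 'rV['Z_W]_(2 * m)) :
  NH_gen s d - NH_gen s d' = nh_block s d j - nh_block s d' j
                     + \sum_(i < m | i != j) (nh_block s d i - nh_block s d' i).
Proof. by rewrite /NH_gen -sumrB (bigD1 j). Qed.

Lemma nh_block_shift_other (i j : 'I_m) (c : 'I_(2 * m)) (u d : 'rV['Z_W]_(2 * m)) t :
  i != j -> (c == evi j) || (c == odi j) -> nh_block (u + t *: delta_mx 0 c) d i = nh_block u d i.
Proof.
move=> neq_ij c_j; rewrite /nh_block !coord_shift.
have {}neq_ij : (i : nat) <> j by move/val_inj/eqP; exact/negP.
suff [-> ->] : (evi i == c) = false /\ (odi i == c) = false by [].
by case/orP: c_j => /eqP ->; split; apply/eqP => /(congr1 val) /=; lia.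
Qed.

Lemma NH_gen_sub_shift_inj_of_block (j : 'I_m) (c : 'I_(2 * m)) (d d' u : 'rV['Z_W]_(2 * m)) :
  (c == evi j) || (c == odi j) ->
  injective (fun t => nh_block (u + t *: delta_mx 0 c) d j
                      - nh_block (u + t *: delta_mx 0 c) d' j) ->
  injective (fun t => NH_gen (u + t *: delta_mx 0 c) d - NH_gen (u + t *: delta_mx 0 c) d').
Proof.
move=> c_j inj_j t1 t2; rewrite /= !(NH_gen_sub_block j).
have rest_eq t : \sum_(i < m | i != j) (nh_block (u + t *: delta_mx 0 c) d i
                                       - nh_block (u + t *: delta_mx 0 c) d' i)
                 = \sum_(i < m | i != j) (nh_block u d i - nh_block u d' i).
  by apply: eq_bigr => i neq_ij; rewrite !(@nh_block_shift_other i j c u _ t neq_ij c_j).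
by rewrite (rest_eq t1) (rest_eq t2) => /addIr /inj_j.
Qed.

Lemma NH_gen_sub_shift_inj (d d' : 'rV['Z_W]_(2 * m)) : d != d' ->
  exists c : 'I_(2 * m), forall u : 'rV['Z_W]_(2 * m),
    injective (fun t => NH_gen (u + t *: delta_mx 0 c) d - NH_gen (u + t *: delta_mx 0 c) d').
Proof.
move=> neq_dd'.
have [i0 neq_i0] : exists i0, d 0 i0 != d' 0 i0.
  apply/existsP; apply: contraR neq_dd' => /existsPn same.
  by apply/eqP/rowP => i; apply/eqP; rewrite -[_ == _]negbK same.
have [j ij] := ord_evi_odi i0.
have neq_evi_odi : evi j != odi j by apply/eqP => /(congr1 val) /=; lia.
case: ij neq_i0 => -> neq_i0.
- exists (odi j) => u; apply: (NH_gen_sub_shift_inj_of_block (j := j)); first by rewrite eqxx orbT.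
  move=> t1 t2; rewrite /nh_block !coord_shift eqxx (negbTE neq_evi_odi).
  rewrite ![d 0 (odi j) + _]addrA ![d' 0 (odi j) + _]addrA.
  have neq_x : d 0 (evi j) + u 0 (evi j) != d' 0 (evi j) + u 0 (evi j).
    by apply: contra neq_i0 => /eqP /addIr ->.
  exact/(nh_mul_sub_inj W_gt1 N_sqr neq_x).
- exists (evi j) => u; apply: (NH_gen_sub_shift_inj_of_block (j := j)); first by rewrite eqxx.
  move=> t1 t2; rewrite /nh_block !coord_shift eqxx eq_sym (negbTE neq_evi_odi).
  rewrite ![d 0 (evi j) + _]addrA ![d' 0 (evi j) + _]addrA.
  rewrite ![nh_mul N (_ + t1) _]nh_mulC ![nh_mul N (_ + t2) _]nh_mulC.
  have neq_x : d 0 (odi j) + u 0 (odi j) != d' 0 (odi j) + u 0 (odi j).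
    by apply: contra neq_i0 => /eqP /addIr ->.
  exact/(nh_mul_sub_inj W_gt1 N_sqr neq_x).
Qed.

End GeneralNH.

Lemma card_mul_le_translates (V I : finType) (act : V -> I -> V) (S : {set V}) (c : nat) :
  (forall t, injective (act^~ t)) -> (forall u, #|[set t | act u t \in S]| <= c)%N ->
  (#|S| * #|I| <= c * #|V|)%N.
Proof.
move=> act_inj le_c.
have card_shift t : #|[set u | act u t \in S]| = #|S| by exact: card_preimset.
rewrite mulnC -sum_nat_const (eq_bigr _ (fun t _ => esym (card_shift t))).
under eq_bigr do rewrite -sum1_card big_mkcond /=.
rewrite exchange_big mulnC -sum_nat_const; apply: leq_sum => u _.
by rewrite -big_mkcond /= (eq_bigl (mem [set t | act u t \in S])) ?sum1_card ?le_c // => t; rewrite !inE.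
Qed.

Lemma card_Zp_annihilator_le (N : nat) (z : int) : (1 < N)%N ->
  (#|[set a : 'Z_N | (z%:~R * a == 0)%R]| <= gcdn `|z| N)%N.
Proof.
move=> N_gt1; set g := gcdn `|z| N.
have g_gt0 : (0 < g)%N by rewrite gcdn_gt0 (ltnW N_gt1) orbT.
set N' := (N %/ g)%N.
have N'_gt0 : (0 < N')%N by rewrite divn_gt0 // dvdn_leq ?dvdn_gcdr // ltnW.
have N_eq : (N' * g = N)%N by rewrite divnK ?dvdn_gcdr.
have N'_dvd (a : 'Z_N) : a \in [set a | (z%:~R * a == 0)%R] -> (N' %| a)%N.
  rewrite inE => za0.
  have : (N %| `|z| * a)%N.
    move: za0; rewrite -[a in _ * a]natr_Zp pmulrn -rmorphM /= intr_Zp_eq0 //.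
    by rewrite dvdzE abszM.
  move=> dvd_za; rewrite dvdn_divLR ?dvdn_gcdr // mulnC /g muln_gcdl dvdn_gcd dvd_za.
  exact: dvdn_mulr.
have lt_g (a : 'Z_N) : (a %/ N' < g)%N by rewrite ltn_divLR // mulnC N_eq Zp_val_lt.
rewrite -[X in (_ <= X)%N]card_ord.
apply: (@leq_card_in _ _ (fun a => Ordinal (lt_g a))) => a1 a2 a1_ann a2_ann /(congr1 val) /= E.
by apply: val_inj; rewrite /= -(divnK (N'_dvd _ a1_ann)) -(divnK (N'_dvd _ a2_ann)) E.
Qed.

Lemma card_kermx_le (R : finComNzRingType) k (A : 'M[R]_k) :
  (#|[set w : 'cV[R]_k | (A *m w == 0)%R]| <= #|[set a : R | (\det A * a == 0)%R]| ^ k)%N.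
Proof.
rewrite -[k in (_ ^ k)%N]card_ord -card_ffun_on.
pose col_fun (w : 'cV[R]_k) : {ffun 'I_k -> R} := [ffun j => w j 0].
have col_fun_inj : injective col_fun.
  by move=> w1 w2 /ffunP E; apply/colP => j; have := E j; rewrite !ffunE.
rewrite -(card_imset _ col_fun_inj); apply: subset_leq_card; apply/subsetP => h /imsetP [w].
rewrite inE => /eqP Aw0 ->; apply/ffun_onP => j; rewrite ffunE inE.
have := congr1 (mulmx (\adj A)) Aw0.
by rewrite mulmxA mul_adj_mx mul_scalar_mx mulmx0 => /colP /(_ j); rewrite !mxE => ->.
Qed.

Lemma mulmx_colsub_rowsub (R : pzSemiRingType) r k e (f : 'I_k -> 'I_e)
    (A : 'M[R]_(r, e)) (v : 'cV[R]_e) :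
  injective f -> (forall i, (forall j, f j != i) -> v i 0 = 0) ->
  A *m v = colsub f A *m rowsub f v.
Proof.
move=> f_inj v_supp; apply/matrixP => i0 j0; rewrite !mxE (bigID (mem (f @: setT))) /=.
rewrite [X in _ + X]big1 ?addr0 => [|i /imsetP no_f]; last first.
  rewrite [j0]ord1 v_supp ?mulr0 // => j; apply/eqP => fj; apply: no_f.
  by exists j; rewrite ?inE.
rewrite big_imset /=; last by move=> ? ? _ _; apply: f_inj.
by rewrite big_mkcond /=; apply: eq_bigr => j _; rewrite inE !mxE.
Qed.

Section HashCount.

Variables (W N m : nat) (D : Type) (k e : nat).
Variables (J : D -> 'I_e -> 'rV['Z_W]_(2 * m)) (T : 'M[int]_(k, e)) (x y : D).

Notation key := {ffun 'I_e -> 'rV['Z_W]_(2 * m)}.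
Notation Tz := (map_mx (fun z : int => z%:~R : 'Z_N) T).

Definition EHC_gen (s : key) (z : D) : 'cV['Z_N]_k :=
  Tz *m \col_(i < e) NH_gen N (s i) (J z i).

Definition NH_sub_col (s : key) : 'cV['Z_N]_e :=
  \col_i (NH_gen N (s i) (J x i) - NH_gen N (s i) (J y i)).

Lemma EHC_gen_sub s : EHC_gen s x - EHC_gen s y = Tz *m NH_sub_col s.
Proof. by rewrite /EHC_gen -mulmxBr; congr (_ *m _); apply/colP => i; rewrite !mxE. Qed.

Variables (f : 'I_k -> 'I_e) (c : 'I_k -> 'I_(2 * m)).
Hypothesis f_inj : injective f.
Hypothesis c_shift_inj : forall j (u : 'rV['Z_W]_(2 * m)),
  injective (fun t => NH_gen N (u + t *: delta_mx 0 (c j)) (J x (f j))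
                      - NH_gen N (u + t *: delta_mx 0 (c j)) (J y (f j))).

Definition key_shift (t : {ffun 'I_k -> 'Z_W}) : key :=
  [ffun i => \sum_(j | f j == i) t j *: delta_mx 0 (c j)].

Lemma key_shift_on u t j : (u + key_shift t) (f j) = u (f j) + t j *: delta_mx 0 (c j).
Proof. by rewrite !ffunE (big_pred1 j) // => j'; rewrite /= (inj_eq f_inj). Qed.

Lemma key_shift_off u t i : (forall j, f j != i) -> (u + key_shift t) i = u i.
Proof. by move=> not_f; rewrite !ffunE big_pred0 ?addr0 // => j; exact/negbTE. Qed.

Lemma rowsub_NH_sub_col_inj u : injective (fun t => rowsub f (NH_sub_col (u + key_shift t))).
Proof.
move=> t1 t2 /colP E; apply/ffunP => j; have := E j.
by rewrite !mxE !key_shift_on => /c_shift_inj.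
Qed.

Lemma card_key_shift_fiber_le (u : key) (delta : 'cV['Z_N]_k) :
  (#|[set t | (u + key_shift t)%R \in [set s | (EHC_gen s x - EHC_gen s y == delta)%R]]|
   <= #|[set w : 'cV['Z_N]_k | (colsub f Tz *m w == 0)%R]|)%N.
Proof.
set F := [set t | _]; have [-> | [t0 t0F]] := set_0Vmem F; first by rewrite cards0.
pose h t := rowsub f (NH_sub_col (u + key_shift t)) - rowsub f (NH_sub_col (u + key_shift t0)).
have h_inj : {in F &, injective h} by move=> t1 t2 _ _ /addIr /rowsub_NH_sub_col_inj.
rewrite -(card_in_imset h_inj); apply: subset_leq_card; apply/subsetP => _ /imsetP [t tF ->].
move: tF t0F; rewrite !inE => /eqP Et /eqP Et0.
rewrite /h -linearB /= -mulmx_colsub_rowsub // => [|i not_f]; last first.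
  by rewrite !mxE !key_shift_off ?subrr.
by rewrite linearB /= -!EHC_gen_sub Et Et0 subrr.
Qed.

Lemma card_EHC_gen_fiber_le (delta : 'cV['Z_N]_k) : (1 < W)%N -> (1 < N)%N ->
  (#|[set s | (EHC_gen s x - EHC_gen s y == delta)%R]| * W ^ k
   <= gcdn `|\det (colsub f T)| N ^ k * #|{: key}|)%N.
Proof.
move=> W_gt1 N_gt1.
have card_shifts : #|{: {ffun 'I_k -> 'Z_W}}| = (W ^ k)%N.
  by rewrite card_ffun !card_ord Zp_cast.
rewrite -card_shifts.
apply: leq_trans (card_mul_le_translates (act := fun (u : key) t => u + key_shift t) _
                   (fun u => card_key_shift_fiber_le u delta)) _; first by move=> t; exact: addIr.
rewrite leq_mul2r; apply/orP; right; apply: leq_trans (card_kermx_le _) _.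
have det_Tz : \det (colsub f Tz) = (\det (colsub f T))%:~R by rewrite -map_mxsub det_map_mx.
rewrite det_Tz; move: (card_Zp_annihilator_le (\det (colsub f T)) N_gt1).
move: (#|_|) (gcdn _ _) => a b le_ab.
by elim: (k) => // n IH; rewrite !expnS leq_mul.
Qed.

End HashCount.

Lemma exp2_gt1 n : (0 < n)%N -> (1 < 2 ^ n)%N.
Proof. by move=> n_gt0; rewrite -[X in (X < _)%N]/(2 ^ 0)%N ltn_exp2l. Qed.

Lemma exp2_64_sqr : (2 ^ 64 = 2 ^ 32 * 2 ^ 32)%N.
Proof. by rewrite -expnD. Qed.

Lemma hamming_witness (A : eqType) (e k : nat) (u v : 'I_e -> A) :
  (k <= hamming u v)%N -> exists2 f : 'I_k -> 'I_e, injective f & forall j, u (f j) != v (f j).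
Proof.
move=> k_le; exists (fun j => enum_val (widen_ord k_le j)).
  by move=> j1 j2 /enum_val_inj /(congr1 val) /= /val_inj.
by move=> j; have := enum_valP (widen_ord k_le j); rewrite inE.
Qed.

Lemma gcdn_exp2_le (d : int) (n p : nat) :
  (forall q, ((2 ^ q)%N%:Z %| d)%Z -> (q <= p)%N) -> (gcdn `|d| (2 ^ n) <= 2 ^ p)%N.
Proof.
move=> val2_le; have /(dvdn_pfactor _ _ (isT : prime 2)) [q _ gcd_eq] := dvdn_gcdr `|d| (2 ^ n).
rewrite gcd_eq leq_pexp2l // val2_le // dvdzE absz_nat -gcd_eq.
exact: dvdn_gcdl.
Qed.

Lemma ratio_le_exp2 (S V k p w : nat) : (0 < V)%N ->
  (S * (2 ^ w) ^ k <= (2 ^ p) ^ k * V)%N -> S%:R / V%:R <= 2%:Q ^ (k%:Z * (p%:Z - w%:R)).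
Proof.
move=> V_gt0 le_SV.
have -> : k%:Z * (p%:Z - w%:R) = (p * k)%N%:Z + - (w * k)%N%:Z by rewrite !PoszM; ring.
rewrite expfzDr // -invr_expz -!exprnP -!natrX !expnM.
by rewrite ler_pdivrMr ?ltr0n // mulrAC ler_pdivlMr ?ltr0n ?expn_gt0 // -!natrM ler_nat.
Qed.

Theorem mainTheorem2 (D : Type) (m k e : nat)
  (hm : (1 <= m)%N) (hk : (1 <= k)%N) (hke : (k <= e)%N)
  (J : D -> 'I_e -> Sigma m)
  (hJ : forall x y : D, x <> y -> (k <= hamming (J x) (J y))%N)
  (T : 'M[int]_(k, e))
  (hT : forall f : 'I_k -> 'I_e, injective f ->
          ~~ (((2 ^ 64)%N%:Z) %| \det (colsub f T))%Z)
  (p : nat)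
  (hp1 : exists2 f : 'I_k -> 'I_e, injective f &
          (((2 ^ p)%N%:Z) %| \det (colsub f T))%Z)
  (hp2 : forall (f : 'I_k -> 'I_e) (q : nat), injective f ->
          (((2 ^ q)%N%:Z) %| \det (colsub f T))%Z -> (q <= p)%N) :
  forall (x y : D), x <> y -> forall delta : 'cV['Z_(2 ^ 64)]_k,
    diff_prob J T x y delta <= (2%:Q) ^ ((k%:Z) * (p%:Z - 32)).
Proof.
move=> x y neq_xy delta.
have [f f_inj f_diff] := hamming_witness (hJ x y neq_xy).
have [c c_inj] :=
  fin_all_exists (fun j => NH_gen_sub_shift_inj (@exp2_gt1 32 isT) exp2_64_sqr (f_diff j)).
have count := card_EHC_gen_fiber_le T f_inj c_inj delta (@exp2_gt1 32 isT) (@exp2_gt1 64 isT).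
have gcd_le := gcdn_exp2_le 64 (fun q => hp2 f q f_inj).
apply: ratio_le_exp2; first by apply/card_gt0P; exists 0.
by apply: leq_trans count _; rewrite leq_mul2r leq_exp2r ?gcd_le ?orbT.
Qed.
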